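(* In the setting of the context, suppose that $m$, the order of $\sigma$, is prime. Then for every nonzero integer $k$, $\tilde{\mathfrak g}_{k\delta}=\pi_k(\mathfrak h)\otimes t^k$. Furthermore, if $\mathfrak g$ is a finite-dimensional simple Lie algebra, then $\tilde{\mathfrak g}_{k\delta}\subseteq\tilde{\mathfrak g}_c$.
   Context: All Lie algebras are over $\mathbb C$. An extended affine Lie algebra (EALA) is a triple $(\mathfrak g,(\cdot,\cdot),\mathfrak h)$ where $\mathfrak g$ is a Lie algebra, $\mathfrak h$ a subalgebra and $(\cdot,\cdot)$ a bilinear form such that: the form is symmetric, non-degenerate, invariant; $\mathfrak h$ is finite-dimensional and $\mathfrak g=\bigoplus_{\alpha\in\mathfrak h^*}\mathfrak g_\alpha$, $\mathfrak g_\alpha=\{x:[h,x]=\alpha(h)x\ \forall h\in\mathfrak h\}$, $\mathfrak g_0=\mathfrak h$; with root system $R=\{\alpha:\mathfrak g_\alpha\ne0\}$, $t_\alpha\in\mathfrak h$ given by $\alpha(h)=(h,t_\alpha)$, $(\alpha,\beta)=(t_\alpha,t_\beta)$, $R^\times=\{\alpha\in R:(\alpha,\alpha)\ne0\}$, $R^0=R\setminus R^\times$: $\mathrm{ad}\,x$ locally nilpotent for $x\in\mathfrak g_\alpha$, $\alpha\in R^\times$; $R$ discrete; $R^\times$ connected and isotropic roots non-isolated. Root systems are assumed reduced. A finite-dimensional simple Lie algebra with a Cartan subalgebra and (a multiple of) its Killing form is an EALA of this kind. The core of an EALA is the subalgebra generated by its non-isotropic root spaces. Setting: $(\mathfrak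 g,(\cdot,\cdot),\mathfrak h)$ is an EALA with root system $R$; $\sigma$ is an automorphism of $\mathfrak g$ with $\sigma^m=\mathrm{id}$, $\sigma(\mathfrak h)=\mathfrak h$, $(\sigma x,\sigma y)=(x,y)$, and $C_{\mathfrak g^\sigma}(\mathfrak h^\sigma)=\mathfrak h^\sigma$ ($\mathfrak g^\sigma,\mathfrak h^\sigma$ fixed points, $C$ centralizer). $\sigma$ acts on $\mathfrak h^*$ by $\sigma(\alpha)(h)=\alpha(\sigma^{-1}h)$. Let $\omega$ be a primitive $m$-th root of unity, $\mathfrak g^{\bar i}=\{x:\sigma(x)=\omega^ix\}$, $\pi_j=\frac1m\sum_{i=0}^{m-1}\omega^{-ij}\sigma^i$ (indices mod $m$), $\pi=\pi_0$. Assume some $\alpha\in R^\times$ has $(\pi(\alpha),\pi(\alpha))\ne0$. The affinization $\tilde{\mathfrak g}=\bigoplus_{i\in\mathbb Z}(\mathfrak g^{\bar i}\otimes t^i)\oplus\mathbb Cc\oplus\mathbb Cd$ has bracket $[x\otimes t^n+rc+sd,\,y\otimes t^{n'}+r'c+s'd]=[x,y]\otimes t^{n+n'}+n\delta_{n+n',0}(x,y)c+sn'\,y\otimes t^{n'}-s'n\,x\otimes t^n$ and form $(x\otimes t^n+rc+sd,\,y\otimes t^{n'}+r'c+s'd)=\delta_{n+n',0}(x,y)+rs'+r's$; with $\tilde{\mathfrak h}=\mathfrak h^\sigma\oplus\mathbb Cc\oplus\mathbb Cd$, it is an EALA (a known fact) with root spaces $\tilde{\mathfrak g}_{\tilde\alpha}$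 ($\tilde\alpha\in\tilde{\mathfrak h}^*$) and core $\tilde{\mathfrak g}_c$. $\delta\in\tilde{\mathfrak h}^*$ vanishes on $\mathfrak h^\sigma\oplus\mathbb Cc$ with $\delta(d)=1$. *)

From HB Require Import structures.
From mathcomp Require Import all_boot all_order all_algebra.
From mathcomp Require Export complex reals.
Set Implicit Arguments. Unset Strict Implicit. Unset Printing Implicit Defensive.
Import Order.TTheory GRing.Theory Num.Theory.
Local Open Scope ring_scope.

Section LieDefs.
Variables (C : numClosedFieldType) (V : lmodType C).
Variable br : V -> V -> V.
Variable B : V -> V -> C.
Variable h : V -> Prop.

Definition is_lie : Prop :=
  [/\ (forall a x y z, br (a *: x + y) z = a *: br x z + br y z),
      (forall a x y z, br x (a *: y + z) = a *: br x y + br x z),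
      (forall x, br x x = 0) &
      (forall x y z, br x (br y z) + br y (br z x) + br z (br x y) = 0)].

Definition subspace (P : V -> Prop) : Prop :=
  P 0 /\ (forall a x y, P x -> P y -> P (a *: x + y)).
Definition subalgebra (P : V -> Prop) : Prop :=
  subspace P /\ (forall x y, P x -> P y -> P (br x y)).
Definition lie_ideal (P : V -> Prop) : Prop :=
  subspace P /\ (forall x y, P y -> P (br x y)).

Definition finite_dim (P : V -> Prop) : Prop :=
  exists s : seq V, forall x,
    P x <-> exists c : 'I_(size s) -> C, x = \sum_(i < size s) c i *: s`_i.

Definition simple_lie : Prop :=
  (exists x y, br x y != 0) /\
  (forall I, lie_ideal I -> (forall x, I x -> x = 0) \/ (forall x, I x)).

Definition good_form : Prop :=
  [/\ (forall a x y z, B (a *: x + y) z = a * B x z + B y z),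
      (forall x y, B x y = B y x),
      (forall x, (forall y, B x y = 0) -> x = 0) &
      (forall x y z, B (br x y) z = B x (br y z))].

(** elements of h^* are represented by functions V -> C that are linear on h;
    two such represent the same functional iff they agree on h. *)
Definition hdual (al : V -> C) : Prop :=
  forall a y z, h y -> h z -> al (a *: y + z) = a * al y + al z.
Definition eqh (al be : V -> C) : Prop := forall y, h y -> al y = be y.

Definition rootsp (al : V -> C) (x : V) : Prop :=
  forall y, h y -> br y x = al y *: x.

Definition is_root (al : V -> C) : Prop :=
  hdual al /\ exists x, x != 0 /\ rootsp al x.

Definition tvec (al : V -> C) (t : V) : Prop :=
  h t /\ forall y, h y -> al y = B y t.

Definition nonisotropic (al : V -> C) : Prop :=
  exists t, tvec al t /\ B t t != 0.
Definition orth (al be : V -> C) : Prop :=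
  exists ta tb, [/\ tvec al ta, tvec be tb & B ta tb = 0].

Definition Rx (al : V -> C) : Prop := is_root al /\ nonisotropic al.
Definition R0 (al : V -> C) : Prop := is_root al /\ ~ nonisotropic al.

Definition eala : Prop :=
  [/\ is_lie, good_form, subalgebra h & finite_dim h] /\
  [/\
      (forall x, exists n (al : 'I_n -> V -> C) (xs : 'I_n -> V),
          (forall i, hdual (al i) /\ rootsp (al i) (xs i)) /\
          x = \sum_(i < n) xs i),
      (forall x, rootsp (fun _ => 0) x <-> h x),
      (forall al x, Rx al -> rootsp al x ->
          forall y, exists n, iter n (br x) y = 0) &
      [/\
      (forall al, is_root al -> exists (ys : seq V) (e : C),
          [/\ 0 < e, (forall y, y \in ys -> h y) &
              forall be, is_root be ->
                (forall y, y \in ys -> `|be y - al y| < e) -> eqh be al]),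
      ~ (exists R1 R2 : (V -> C) -> Prop,
          [/\ (forall al, Rx al -> R1 al \/ R2 al),
              (forall al, R1 al -> Rx al), (forall al, R2 al -> Rx al),
              (exists al, R1 al) /\ (exists al, R2 al) &
              (forall al be, R1 al -> R2 be -> orth al be)]),
      (forall de, R0 de -> exists al, Rx al /\ Rx (fun y => al y + de y)) &
      (forall al, Rx al -> ~ is_root (fun y => 2 * al y))]].

Definition lie_aut (s : V -> V) : Prop :=
  [/\ (forall a x y, s (a *: x + y) = a *: s x + s y), bijective s &
      (forall x y, s (br x y) = br (s x) (s y))].

Variables (sigma : V -> V) (m : nat) (w : C).

(** sigma acting on h^*:  (sigma^i alpha)(y) = alpha(sigma^{-i} y)
    = alpha(sigma^(m-i) y); pi(alpha) = 1/m sum_i sigma^i(alpha). *)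
Definition pi_dual (al : V -> C) : V -> C :=
  fun y => m%:R^-1 * \sum_(i < m) al (iter (m - i) sigma y).

Definition pik (k : int) (x : V) : V :=
  m%:R^-1 *: \sum_(i < m) (w ^ (- ((i : nat)%:Z * k))) *: iter i sigma x.

(** An element  sum_n x_n (x) t^n + r c + s d  is recorded as
    (n |-> x_n, r, s); it belongs to g~ iff it has finite support and
    x_n is in g^(n mod m), i.e. sigma x_n = w^n x_n. *)
Record aff := Aff { aloop : int -> V ; acen : C ; ader : C }.

Definition bounded (N : nat) (X : aff) : Prop :=
  forall n : int, (N < `|n|)%N -> aloop X n = 0.

Definition in_aff (X : aff) : Prop :=
  (exists N, bounded N X) /\
  (forall n : int, sigma (aloop X n) = w ^ n *: aloop X n).

Definition aff_add (X Y : aff) : aff :=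
  Aff (fun n => aloop X n + aloop Y n) (acen X + acen Y) (ader X + ader Y).
Definition aff_scale (a : C) (X : aff) : aff :=
  Aff (fun n => a *: aloop X n) (a * acen X) (a * ader X).
Definition aff_zero : aff := Aff (fun _ => 0) 0 0.

(** the bracket of g~, computed with a bound N on the support of X
    (it is the true bracket whenever bounded N X):
    [x t^a + r c + s d, y t^b + r' c + s' d]
      = [x,y] t^(a+b) + a delta_(a+b,0) (x,y) c + s b y t^b - s' a x t^a *)
Definition aff_br (N : nat) (X Y : aff) : aff :=
  Aff (fun n =>
         \sum_(i < N.*2.+1)
            br (aloop X ((i : nat)%:Z - N%:Z)) (aloop Y (n - ((i : nat)%:Z - N%:Z)))
         + (ader X * n%:~R) *: aloop Y n - (ader Y * n%:~R) *: aloop X n)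
      (\sum_(i < N.*2.+1)
          ((i : nat)%:Z - N%:Z)%:~R *
          B (aloop X ((i : nat)%:Z - N%:Z)) (aloop Y (- ((i : nat)%:Z - N%:Z))))
      0.

Definition aff_form (N : nat) (X Y : aff) : C :=
  \sum_(i < N.*2.+1)
     B (aloop X ((i : nat)%:Z - N%:Z)) (aloop Y (- ((i : nat)%:Z - N%:Z)))
  + acen X * ader Y + acen Y * ader X.

(** h~ = h^sigma (+) C c (+) C d *)
Definition in_htilde (H : aff) : Prop :=
  [/\ (forall n : int, n != 0 -> aloop H n = 0),
      h (aloop H 0) & sigma (aloop H 0) = aloop H 0].

(** delta(H) = d-coefficient of H; root space g~_(k delta) *)
Definition kdelta_space (k : int) (X : aff) : Prop :=
  in_aff X /\
  forall H, in_htilde H -> aff_br 0 H X = aff_scale (k%:~R * ader H) X.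

Definition pik_h_tk (k : int) (X : aff) : Prop :=
  exists y, h y /\ X = Aff (fun n => if n == k then pik k y else 0) 0 0.

(** the core g~_c: subalgebra of g~ generated by the root spaces
    g~_alpha~, alpha~ in h~^* with (alpha~, alpha~) <> 0; alpha~ is
    represented by t_alpha~ in h~ (alpha~(H) = (H, t_alpha~)). *)
Inductive aff_core : aff -> Prop :=
| core_root (t X : aff) :
    in_htilde t -> aff_form 0 t t != 0 -> in_aff X ->
    (forall H, in_htilde H -> aff_br 0 H X = aff_scale (aff_form 0 H t) X) ->
    aff_core X
| core_zero : aff_core aff_zero
| core_add X Y : aff_core X -> aff_core Y -> aff_core (aff_add X Y)
| core_scale a X : aff_core X -> aff_core (aff_scale a X)
| core_br N X Y : aff_core X -> aff_core Y -> bounded N X ->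
    aff_core (aff_br N X Y).

End LieDefs.

(* Let [t] be a root vector whose weight [beta] vanishes on the fixed points
   [h^sigma].  The orbit sum of [t] is fixed and centralizes [h^sigma], so it
   lies in [h]; as [m] is prime, the translates [beta o sigma^i] of a nonzero
   [beta] are pairwise distinct, and independence of root spaces forces
   [t = 0].  Hence the centralizer of [h^sigma] is [h], which identifies the
   [t^k]-component of an element of the root space [k delta] with some
   [pi_k(y)], [y] in [h].

   If [g] is simple, [h] is spanned by brackets [[e, f]] of root vectors of
   opposite weights [alpha] and [-alpha].  When [alpha] restricted to
   [h^sigma] is nonisotropic, [pi_k [e, f] t^k] is a sum of brackets of the
   vectors [pi_a e t^a] and [pi_(k-a) f t^(k-a)], which lie in nonisotropic
   root spaces of the affinization.  Otherwise [[e, f] = 0]: in a finite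
   dimensional simple Lie algebra an element [T = [E, F]] of [h] commuting
   with [E] vanishes, because each power of the diagonalizable [ad T] is a
   commutator, hence traceless. *)

From mathcomp Require Import all_boot all_order all_algebra complex reals.
From mathcomp Require Import boolp zify ring.
Set Implicit Arguments. Unset Strict Implicit. Unset Printing Implicit Defensive.
Import Order.TTheory GRing.Theory Num.Theory.
Local Open Scope ring_scope.

Section LinearHyp.
Variables (R : pzRingType) (U W : lmodType R) (f : U -> W).
Hypothesis f_lin : linear f.

Lemma linD : {morph f : x y / x + y}.
Proof. exact: (GRing.semilinear_linear f_lin).2. Qed.

Lemma linZ a : {morph f : x / a *: x}.
Proof. exact: (GRing.semilinear_linear f_lin).1. Qed.

Lemma lin0 : f 0 = 0.
Proof. by rewrite -(scale0r 0) linZ scale0r. Qed.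

Lemma linN : {morph f : x / - x}.
Proof. by move=> x; rewrite -scaleN1r linZ scaleN1r. Qed.

Lemma linB : {morph f : x y / x - y}.
Proof. by move=> x y; rewrite linD linN. Qed.

Lemma lin_sum (I : Type) (r : seq I) (P : pred I) (F : I -> U) :
  f (\sum_(i <- r | P i) F i) = \sum_(i <- r | P i) f (F i).
Proof. exact: (big_morph f linD lin0). Qed.

End LinearHyp.

Lemma lin_comp (R : pzRingType) (U W Z : lmodType R) (f : W -> Z) (g : U -> W) :
  linear f -> linear g -> linear (fun x => f (g x)).
Proof. by move=> f_lin g_lin a x y; rewrite g_lin f_lin. Qed.

Lemma lin_iter (R : pzRingType) (U : lmodType R) (f : U -> U) n :
  linear f -> linear (iter n f).
Proof. by move=> f_lin; elim: n => [|n IH] a x y //=; rewrite IH f_lin. Qed.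

Section Subspace.
Variables (C : numClosedFieldType) (V : lmodType C) (P : V -> Prop).
Hypothesis P_sub : subspace P.

Lemma subspace0 : P 0. Proof. by case: P_sub. Qed.

Lemma subspaceZD a x y : P x -> P y -> P (a *: x + y).
Proof. by case: P_sub => _; apply. Qed.

Lemma subspaceD x y : P x -> P y -> P (x + y).
Proof. by move=> Px Py; have := subspaceZD 1 Px Py; rewrite scale1r. Qed.

Lemma subspaceZ a x : P x -> P (a *: x).
Proof. by move=> Px; rewrite -[_ *: _]addr0; apply: subspaceZD => //; apply: subspace0. Qed.

Lemma subspaceN x : P x -> P (- x).
Proof. by rewrite -scaleN1r; apply: subspaceZ. Qed.

Lemma subspaceB x y : P x -> P y -> P (x - y).
Proof. by move=> Px Py; apply: subspaceD => //; apply: subspaceN. Qed.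

Lemma subspace_sum (I : Type) (r : seq I) (Q : pred I) (F : I -> V) :
  (forall i, Q i -> P (F i)) -> P (\sum_(i <- r | Q i) F i).
Proof.
move=> PF; elim/big_rec: _ => [|i x Qi Px]; first exact: subspace0.
by apply: subspaceD => //; apply: PF.
Qed.

End Subspace.

Section LieBracket.
Variables (C : numClosedFieldType) (V : lmodType C) (br : V -> V -> V).
Hypothesis br_lie : is_lie br.

Lemma br_linr x : linear (br x).
Proof. by case: br_lie => _ Hr _ _ a y z; rewrite Hr. Qed.

Lemma br_linl z : linear (br^~ z).
Proof. by case: br_lie => Hl _ _ _ a y x; rewrite Hl. Qed.

Lemma br0r x : br x 0 = 0. Proof. exact: lin0 (br_linr x). Qed.
Lemma br0l x : br 0 x = 0. Proof. exact: lin0 (br_linl x). Qed.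
Lemma brDr x : {morph br x : y z / y + z}. Proof. exact: linD (br_linr x). Qed.
Lemma brDl z : {morph br^~ z : x y / x + y}. Proof. exact: linD (br_linl z). Qed.
Lemma brZr a x y : br x (a *: y) = a *: br x y. Proof. exact: linZ (br_linr x) a y. Qed.
Lemma brZl a x y : br (a *: x) y = a *: br x y. Proof. exact: linZ (br_linl y) a x. Qed.
Lemma brNr x y : br x (- y) = - br x y. Proof. exact: linN (br_linr x) y. Qed.

Lemma br_sumr x (I : Type) (r : seq I) (P : pred I) (F : I -> V) :
  br x (\sum_(i <- r | P i) F i) = \sum_(i <- r | P i) br x (F i).
Proof. exact: (lin_sum (br_linr x) r P F). Qed.

Lemma br_suml z (I : Type) (r : seq I) (P : pred I) (F : I -> V) :
  br (\sum_(i <- r | P i) F i) z = \sum_(i <- r | P i) br (F i) z.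
Proof. exact: (lin_sum (br_linl z) r P F). Qed.

Lemma brC x y : br x y = - br y x.
Proof.
case: br_lie => _ _ brxx _; apply/eqP; rewrite -addr_eq0.
by have := brxx (x + y); rewrite brDl !brDr !brxx add0r addr0 => ->.
Qed.

Lemma br_jacobi x y z : br x (br y z) = br (br x y) z + br y (br x z).
Proof.
case: br_lie => _ _ _ jacobi; apply/eqP; rewrite -subr_eq0.
by rewrite (brC (br x y)) (brC x z) brNr opprD !opprK addrA addrAC jacobi.
Qed.

End LieBracket.

Section BilinearForm.
Variables (C : numClosedFieldType) (V : lmodType C).
Variables (br : V -> V -> V) (B : V -> V -> C).
Hypothesis form_good : good_form br B.

Lemma BC x y : B x y = B y x. Proof. by case: form_good. Qed.

Lemma B_invariant x y z : B (br x y) z = B x (br y z). Proof. by case: form_good. Qed.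

Lemma BDl z x y : B (x + y) z = B x z + B y z.
Proof. by case: form_good => BZD _ _ _; have := BZD 1 x y z; rewrite scale1r mul1r. Qed.

Lemma B0l z : B 0 z = 0.
Proof. by apply: (addrI (B 0 z)); rewrite -BDl !addr0. Qed.

Lemma BZl a x z : B (a *: x) z = a * B x z.
Proof. by case: form_good => BZD _ _ _; have := BZD a x 0 z; rewrite !addr0 B0l addr0. Qed.

Lemma BNl x z : B (- x) z = - B x z.
Proof. by rewrite -scaleN1r BZl mulN1r. Qed.

Lemma B0r z : B z 0 = 0. Proof. by rewrite BC B0l. Qed.
Lemma BZr a x z : B z (a *: x) = a * B z x. Proof. by rewrite !(BC z) BZl. Qed.
Lemma BNr x z : B z (- x) = - B z x. Proof. by rewrite !(BC z) BNl. Qed.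

Lemma B_suml z (I : Type) (r : seq I) (P : pred I) (F : I -> V) :
  B (\sum_(i <- r | P i) F i) z = \sum_(i <- r | P i) B (F i) z.
Proof. exact: (big_morph (B^~ z) (BDl z) (B0l z)). Qed.

Lemma B_sumr z (I : Type) (r : seq I) (P : pred I) (F : I -> V) :
  B z (\sum_(i <- r | P i) F i) = \sum_(i <- r | P i) B z (F i).
Proof. by rewrite BC B_suml; apply: eq_bigr => i _; rewrite BC. Qed.

Lemma B_br_weight (h : V -> Prop) al e f y : rootsp br h al e -> h y ->
  B y (br e f) = al y * B e f.
Proof. by move=> He hy; rewrite -B_invariant He // BZl. Qed.

End BilinearForm.

Section Span.
Variables (C : numClosedFieldType) (V : lmodType C).

Inductive span_of (S : V -> Prop) : V -> Prop :=
| span_of0 : span_of S 0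
| span_ofZD a x y : S x -> span_of S y -> span_of S (a *: x + y).

Variable S : V -> Prop.

Lemma span_of_subspace : subspace (span_of S).
Proof.
split=> [|a x y Sx]; first exact: span_of0.
elim: Sx => [|b x' y' Sx' _ IH] Sy; first by rewrite scaler0 add0r.
by rewrite scalerDr scalerA -addrA; apply: span_ofZD => //; apply: IH.
Qed.

Lemma span_of_mem x : S x -> span_of S x.
Proof. by move=> Sx; rewrite -[x]addr0 -[x]scale1r; apply: span_ofZD => //; apply: span_of0. Qed.

Lemma span_of_min (P : V -> Prop) : subspace P -> (forall x, S x -> P x) ->
  forall x, span_of S x -> P x.
Proof.
move=> P_sub SP x; elim=> [|a y z Sy _ Pz]; first exact: subspace0.
by apply: subspaceZD => //; apply: SP.
Qed.

Lemma span_of_union (S1 S2 : V -> Prop) x : span_of (fun v => S1 v \/ S2 v) x ->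
  exists x1 x2, [/\ span_of S1 x1, span_of S2 x2 & x = x1 + x2].
Proof.
elim=> [|a v y S12v _ [x1 [x2 [span1 span2 ->]]]].
  by exists 0, 0; split; rewrite ?addr0 //; apply: span_of0.
case: S12v => [S1v|S2v].
  by exists (a *: v + x1), x2; split=> //; [apply: span_ofZD | rewrite addrA].
by exists x1, (a *: v + x2); split=> //; [apply: span_ofZD | rewrite addrCA].
Qed.

Lemma subspace_preim (f : V -> V) (P : V -> Prop) :
  linear f -> subspace P -> subspace (fun x => P (f x)).
Proof.
move=> f_lin P_sub; split=> [|a x y Px Py]; first by rewrite lin0 //; apply: subspace0.
by rewrite f_lin; apply: subspaceZD.
Qed.

End Span.

Section Weights.
Variables (C : numClosedFieldType) (V : lmodType C) (br : V -> V -> V).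
Hypothesis br_lie : is_lie br.
Variable h : V -> Prop.

Lemma eqhPn (al be : V -> C) : ~ eqh h al be -> exists2 y, h y & al y != be y.
Proof.
move=> neq; apply: contra_notP neq => noy y hy.
by apply/eqP/negPn/negP => ne; apply: noy; exists y.
Qed.

Lemma rootsp_subspace al : subspace (rootsp br h al).
Proof.
split=> [y _|a x z Hx Hz y hy]; first by rewrite (br0r br_lie) scaler0.
by rewrite (brDr br_lie) (brZr br_lie) (Hx y hy) (Hz y hy) scalerDr !scalerA mulrC.
Qed.

Lemma rootsp_eqh al be x : eqh h al be -> rootsp br h al x -> rootsp br h be x.
Proof. by move=> E Hx y hy; rewrite Hx // E. Qed.

Lemma rootsp_br al be e f : rootsp br h al e -> rootsp br h be f ->
  rootsp br h (fun y => al y + be y) (br e f).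
Proof.
move=> He Hf y hy; rewrite (br_jacobi br_lie) (He y hy) (Hf y hy).
by rewrite (brZl br_lie) (brZr br_lie) scalerDl.
Qed.

Lemma rootsp_hdual al x : subspace h -> x != 0 -> rootsp br h al x -> hdual h al.
Proof.
move=> h_sub x0 Hx a y z hy hz; apply/eqP; rewrite -subr_eq0.
have := Hx _ (subspaceZD h_sub a hy hz).
rewrite (brDl br_lie) (brZl br_lie) (Hx y hy) (Hx z hz).
move/eqP; rewrite eq_sym -subr_eq0 scalerA -scalerDl -scalerBl scaler_eq0.
by rewrite (negbTE x0) orbF.
Qed.

Lemma hdual_sum al (I : Type) (r : seq I) (P : pred I) (F : I -> V) :
  subspace h -> hdual h al -> (forall i, P i -> h (F i)) ->
  al (\sum_(i <- r | P i) F i) = \sum_(i <- r | P i) al (F i).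
Proof.
move=> h_sub al_lin hF; elim: r => [|j r IH].
  have := al_lin 1 0 0 (subspace0 h_sub) (subspace0 h_sub).
  by rewrite !big_nil scaler0 addr0 mul1r -[X in X = _]addr0 => /addrI/esym.
rewrite !big_cons; case: ifP => // Pj; rewrite -IH.
have hr : h (\sum_(i <- r | P i) F i) by exact: subspace_sum.
by have := al_lin 1 _ _ (hF j Pj) hr; rewrite scale1r mul1r.
Qed.

Lemma rootsp_indep (I : Type) (r : seq I) (P : pred I) (al : I -> V -> C)
    (x : I -> V) (gam : V -> C) (u : V) :
  rootsp br h gam u ->
  (forall i, P i -> rootsp br h (al i) (x i) /\ ~ eqh h (al i) gam) ->
  u + \sum_(i <- r | P i) x i = 0 -> u = 0.
Proof.
elim: r u x => [|j r IH] u x Hu Hx; first by rewrite big_nil addr0.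
rewrite big_cons; case: ifP => Pj E; last exact: IH E.
have [Hxj /eqhPn [y hy ne]] := Hx j Pj.
pose F z := br y z - al j y *: z.
have F_lin : linear F.
  move=> a z1 z2; rewrite /F (brDr br_lie) (brZr br_lie).
  by rewrite scalerDr scalerBr !scalerA mulrC addrACA opprD.
have F_rootsp be z : rootsp br h be z -> F z = (be y - al j y) *: z.
  by move=> Hz; rewrite /F Hz // scalerBl.
have /eqP : (gam y - al j y) *: u = 0.
  apply: (IH _ (fun i => F (x i)) (subspaceZ (rootsp_subspace gam) _ Hu)).
    move=> i Pi; have [Hxi Hne] := Hx i Pi; split=> //.
    by rewrite (F_rootsp _ _ Hxi); exact: (subspaceZ (rootsp_subspace (al i)) _ Hxi).
  move/(congr1 F): E; rewrite !(linD F_lin) (lin_sum F_lin) (lin0 F_lin).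
  by rewrite (F_rootsp _ _ Hxj) subrr scale0r add0r (F_rootsp _ _ Hu).
by rewrite scaler_eq0 subr_eq0 eq_sym (negbTE ne) => /eqP.
Qed.

End Weights.

Lemma power_sums_eq0 (F : numDomainType) n (c : 'I_n -> F) :
  (forall k, \sum_(j < n) c j ^+ k.+1 = 0) -> forall j, c j = 0.
Proof.
move=> c_pow j0; apply/eqP/negP => /negP cj0.
(* [p] has no constant term, so the power sums give [\sum_j p.[c j] = 0];
   but [p.[c j]] vanishes unless [c j = c j0]. *)
pose p := 'X * \prod_(l < n | c l != c j0) ('X - (c l)%:P).
have p_c j : p.[c j] = (c j == c j0)%:R * p.[c j0].
  rewrite /p !hornerM !hornerX !horner_prod.
  have [->|ne] := eqVneq (c j) (c j0); first by rewrite mul1r.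
  by rewrite mul0r (bigD1 j) //= hornerXsubC subrr mul0r mulr0.
have p_cj0 : p.[c j0] != 0.
  rewrite /p hornerM hornerX horner_prod mulf_neq0 //.
  by apply/prodf_neq0 => l; rewrite hornerXsubC subr_eq0 eq_sym.
have : \sum_(j < n) p.[c j] = 0.
  rewrite (eq_bigr (fun j => \sum_(k < size p) p`_k * c j ^+ k)) => [|j _];
    last exact: horner_coef.
  rewrite exchange_big big1 // => -[[|k] kp] _ /=.
    by rewrite /p coefXM eqxx big1 // => j _; rewrite mul0r.
  by rewrite -mulr_sumr c_pow mulr0.
apply/eqP; rewrite (eq_bigr _ (fun j _ => p_c j)) -big_distrl /= mulf_neq0 //.
by rewrite -natr_sum pnatr_eq0 (bigD1 j0) //= eqxx.
Qed.

Section FiniteBasis.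
Variables (C : numClosedFieldType) (V : lmodType C).

Definition seq_span (s : seq V) (x : V) :=
  exists c : 'I_(size s) -> C, x = \sum_(i < size s) c i *: s`_i.

Definition seq_free (s : seq V) :=
  forall c : 'I_(size s) -> C, \sum_(i < size s) c i *: s`_i = 0 -> forall i, c i = 0.

Lemma seq_span_subspace s : subspace (seq_span s).
Proof.
split=> [|a x y [cx ->] [cy ->]].
  by exists (fun=> 0); rewrite big1 // => i _; rewrite scale0r.
exists (fun i => a * cx i + cy i); rewrite scaler_sumr -big_split /=.
by apply: eq_bigr => i _; rewrite scalerDl scalerA.
Qed.

Lemma seq_span_mem s x : x \in s -> seq_span s x.
Proof.
rewrite -index_mem => xs; exists (fun i => (i == Ordinal xs)%:R).
rewrite (bigD1 (Ordinal xs)) //= eqxx scale1r nth_index ?big1 ?addr0 -?index_mem //.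
by move=> i /negbTE ->; rewrite scale0r.
Qed.

Lemma seq_span_min (P : V -> Prop) s : subspace P -> (forall x, x \in s -> P x) ->
  forall x, seq_span s x -> P x.
Proof.
move=> P_sub Ps x [c ->]; apply: (subspace_sum P_sub) => i _.
by apply/(subspaceZ P_sub)/Ps/mem_nth.
Qed.

Lemma exists_free_subbasis (P : V -> Prop) s : (forall x, x \in s -> P x) ->
  exists2 b, (forall x, x \in b -> P x) & (forall x, seq_span s x -> seq_span b x) /\ seq_free b.
Proof.
elim: s => [|x s IH] Ps.
  exists [::] => //; split=> [y [c ->]|c _ []]; last by [].
  by rewrite big_ord0; apply: subspace0 (seq_span_subspace _).
have [b Pb [sb b_free]] : exists2 b, (forall x, x \in b -> P x) &
    (forall x, seq_span s x -> seq_span b x) /\ seq_free b.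
  by apply: IH => y ys; apply: Ps; rewrite inE ys orbT.
have span_sb y : y \in s -> seq_span b y by move=> ys; apply/sb/seq_span_mem.
have [xb|xNb] := pselect (seq_span b x).
  exists b => //; split=> //; apply: (seq_span_min (seq_span_subspace b)) => y.
  by rewrite inE => /predU1P [->|/span_sb].
exists (x :: b); first by move=> y; rewrite inE => /predU1P [->|/Pb //]; apply/Ps/mem_head.
split=> [|c].
  have span_b y : seq_span b y -> seq_span (x :: b) y.
    apply: (seq_span_min (seq_span_subspace _)) => z zb.
    by apply: seq_span_mem; rewrite inE zb orbT.
  apply: (seq_span_min (seq_span_subspace _)) => y; rewrite inE.
  by case/predU1P => [->|/span_sb/span_b //]; apply/seq_span_mem/mem_head.
rewrite /= big_ord_recl /= => cE.
have c0 : c ord0 = 0.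
  apply: contra_notP xNb => /eqP c0; exists (fun i => - (c ord0)^-1 * c (lift ord0 i)).
  apply: (scalerI c0); rewrite scaler_sumr.
  rewrite (eq_bigr (fun i => - (c (lift ord0 i) *: b`_i))) => [|i _]; last first.
    by rewrite scalerA mulrA mulrN mulfV // mulN1r scaleNr.
  by rewrite sumrN; apply/eqP; rewrite -addr_eq0 cE.
rewrite c0 scale0r add0r in cE.
by move=> i; case: (unliftP ord0 i) => [j ->|->] //; apply: (b_free _ cE).
Qed.

Variable b : seq V.
Hypothesis b_span : forall x, seq_span b x.
Hypothesis b_free : seq_free b.
Local Notation n := (size b).

Definition bcoord (x : V) : 'I_n -> C := sval (cid (b_span x)).

Lemma bcoordE x : x = \sum_(i < n) bcoord x i *: b`_i.
Proof. exact: svalP (cid (b_span x)). Qed.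

Lemma bcoord_unique x (c : 'I_n -> C) : x = \sum_(i < n) c i *: b`_i -> bcoord x = c.
Proof.
move=> xE; apply: funext => i; apply/eqP; rewrite -subr_eq0; apply/eqP; move: i.
apply: b_free; rewrite (eq_bigr (fun i => bcoord x i *: b`_i - c i *: b`_i)) => [|i _].
  by rewrite sumrB -bcoordE -xE subrr.
by rewrite scalerBl.
Qed.

Lemma bcoord_lin i : linear (fun x => bcoord x i : C^o).
Proof.
move=> a x y; rewrite (bcoord_unique (c := fun i => a * bcoord x i + bcoord y i)) //.
rewrite {1}(bcoordE x) {1}(bcoordE y) scaler_sumr -big_split /=.
by apply: eq_bigr => j _; rewrite scalerDl scalerA.
Qed.

Lemma bcoord_nth (i j : 'I_n) : bcoord b`_j i = (i == j)%:R.
Proof.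
rewrite (bcoord_unique (c := fun i => (i == j)%:R)) // (bigD1 j) //= eqxx scale1r big1 ?addr0 //.
by move=> k /negbTE ->; rewrite scale0r.
Qed.

Definition trace (A : V -> V) := \sum_(j < n) bcoord (A b`_j) j.

Lemma trace_commutator A G : linear A -> linear G ->
  trace (fun x => A (G x) - G (A x)) = 0.
Proof.
have trace_comp (F H : V -> V) : linear F -> trace (fun x => F (H x)) =
    \sum_(j < n) \sum_(l < n) bcoord (H b`_j) l * bcoord (F b`_l) j.
  move=> F_lin; apply: eq_bigr => j _; rewrite {1}(bcoordE (H b`_j)) (lin_sum F_lin).
  rewrite (lin_sum (bcoord_lin j)); apply: eq_bigr => l _.
  by rewrite (linZ F_lin) (linZ (bcoord_lin j)).
move=> A_lin G_lin; rewrite {1}/trace.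
rewrite (eq_bigr (fun j : 'I_n => bcoord (A (G b`_j)) j - bcoord (G (A b`_j)) j));
  last by move=> j _; apply: (linB (bcoord_lin j)).
rewrite sumrB -/(trace (fun x => A (G x))) -/(trace (fun x => G (A x))).
rewrite (trace_comp _ _ A_lin) (trace_comp _ _ G_lin) [X in _ - X]exchange_big /=.
apply/eqP; rewrite subr_eq0; apply/eqP/eq_bigr => j _.
by apply: eq_bigr => l _; rewrite mulrC.
Qed.

Lemma eigenbasis_trace_pow_eq0 D : linear D ->
  (forall j : 'I_n, exists c, D b`_j = c *: b`_j) ->
  (forall k, trace (iter k.+1 D) = 0) -> forall x, D x = 0.
Proof.
move=> D_lin D_eig trace_pow0.
pose c (j : 'I_n) := bcoord (D b`_j) j.
have Dc (j : 'I_n) : D b`_j = c j *: b`_j.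
  have [a Da] := D_eig j; rewrite /c Da (linZ (bcoord_lin j)) bcoord_nth eqxx.
  by rewrite [_ *: 1]mulr1.
have Dk k (j : 'I_n) : iter k D b`_j = c j ^+ k *: b`_j.
  elim: k => [|k IH] /=; first by rewrite scale1r.
  by rewrite IH (linZ D_lin) Dc scalerA exprSr.
have c0 : forall j, c j = 0.
  apply: power_sums_eq0 => k; rewrite -[RHS](trace_pow0 k); apply: eq_bigr => j _.
  by rewrite Dk (linZ (bcoord_lin j)) bcoord_nth eqxx [_ *: 1]mulr1.
move=> x; rewrite (bcoordE x) (lin_sum D_lin) big1 // => j _.
by rewrite (linZ D_lin) Dc c0 scale0r scaler0.
Qed.

End FiniteBasis.

Section Affinization.
Variables (C : numClosedFieldType) (V : lmodType C).
Variables (br : V -> V -> V) (B : V -> V -> C).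
Hypothesis br_lie : is_lie br.
Hypothesis form_good : good_form br B.

Definition aff_tk (k : int) (v : V) : aff V := Aff (fun n => if n == k then v else 0) 0 0.

Lemma aff_ext (X Y : aff V) : (forall n, aloop X n = aloop Y n) -> acen X = acen Y ->
  ader X = ader Y -> X = Y.
Proof. by case: X => f c d; case: Y => f' c' d' /= /funext -> -> ->. Qed.

Lemma bounded_tk N k v : (`|k| <= N)%N -> bounded N (aff_tk k v).
Proof. by move=> kN n /=; case: ifP => // /eqP -> /(leq_ltn_trans kN); rewrite ltnn. Qed.

Lemma aff_tk0 k : aff_tk k 0 = aff_zero V.
Proof. by apply: aff_ext => //= n; case: ifP. Qed.

Lemma aff_tkZD k a x y :
  aff_tk k (a *: x + y) = aff_add (aff_scale a (aff_tk k x)) (aff_tk k y).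
Proof.
apply: aff_ext => /= [n||]; rewrite ?mulr0 ?addr0 //.
by case: ifP => _ //; rewrite scaler0 addr0.
Qed.

Lemma aff_br0E (H X : aff V) : aff_br br B 0 H X =
  Aff (fun n => br (aloop H 0) (aloop X n) + (ader H * n%:~R) *: aloop X n
                 - (ader X * n%:~R) *: aloop H n) 0 0.
Proof.
rewrite /aff_br big_ord1 /= subrr mul0r; congr Aff.
by apply: funext => n; rewrite big_ord1 /= subrr subr0.
Qed.

Lemma aff_br_htilde_tk (H : aff V) k v (al : V -> C) :
  (forall n, n != 0 -> aloop H n = 0) -> br (aloop H 0) v = al (aloop H 0) *: v ->
  aff_br br B 0 H (aff_tk k v) = aff_scale (al (aloop H 0) + k%:~R * ader H) (aff_tk k v).
Proof.
move=> H0 Hv; rewrite aff_br0E; apply: aff_ext => /= [n||]; rewrite ?mulr0 //.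
case: ifP => [/eqP ->|_]; last by rewrite br0r // mul0r !scale0r !scaler0 subr0 addr0.
by rewrite Hv mul0r scale0r subr0 mulrC scalerDl.
Qed.

Lemma aff_d_eigen (k : int) (X : aff V) : k != 0 ->
  aff_br br B 0 (Aff (fun _ => 0) 0 1) X = aff_scale (k%:~R * 1) X -> X = aff_tk k (aloop X k).
Proof.
move=> k0; rewrite aff_br0E /aff_scale mulr1.
have kR : (k%:~R : C) != 0 by rewrite intr_eq0.
case=> X_loop /esym/eqP cX /esym/eqP dX; apply: aff_ext => /= [n||].
- case: ifP => [/eqP -> //|/negbT nk]; move: (congr1 (fun f => f n) X_loop).
  rewrite /= br0l // add0r scaler0 subr0 mul1r => /eqP.
  by rewrite -subr_eq0 -scalerBl scaler_eq0 subr_eq0 eqr_int (negbTE nk) => /eqP.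
- by move: cX; rewrite mulf_eq0 (negbTE kR) => /eqP.
- by move: dX; rewrite mulf_eq0 (negbTE kR) => /eqP.
Qed.

Lemma aff_br_tk (a : nat) (b : int) x y N : (a <= N)%N -> a%:Z + b != 0 ->
  aff_br br B N (aff_tk a x) (aff_tk b y) = aff_tk (a%:Z + b) (br x y).
Proof.
move=> aN ab0; have i0_lt : (a + N < N.*2.+1)%N by rewrite -addnn ltnS leq_add2r.
pose i0 := Ordinal i0_lt.
have i0E : (i0 : nat)%:Z - N%:Z = a%:Z by rewrite /= PoszD addrK.
have iNE (i : 'I_N.*2.+1) : i != i0 -> ((i : nat)%:Z - N%:Z == a%:Z) = false.
  move=> ne; apply/negbTE; apply: contra ne => /eqP iE; apply/eqP/val_inj => /=.
  by apply/eqP; rewrite -eqz_nat PoszD -iE subrK.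
apply: aff_ext => /= [n||//].
  rewrite (bigD1 i0) //= i0E eqxx big1 ?addr0 => [|i ne]; last by rewrite iNE // br0l.
  rewrite !mul0r !scale0r subr0 addr0 (_ : (n - a%:Z == b) = (n == a%:Z + b)).
    by case: ifP => // _; rewrite br0r.
  by apply/eqP/eqP => [<-|->]; [rewrite addrC subrK | rewrite addrC addKr].
rewrite (bigD1 i0) //= i0E eqxx big1 ?addr0 => [|i ne];
  last by rewrite iNE // (B0l form_good) mulr0.
rewrite ifF ?(B0r form_good) ?mulr0 //; apply/negbTE; apply: contra ab0 => /eqP <-.
by rewrite addrN.
Qed.

End Affinization.

Section EALA.
Variables (C : numClosedFieldType) (V : lmodType C).
Variables (br : V -> V -> V) (h : V -> Prop).
Hypothesis br_lie : is_lie br.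
Hypothesis h_sub : subspace h.
Hypothesis g0_h : forall x, rootsp br h (fun _ => 0) x <-> h x.
Hypothesis root_decomp : forall x, exists n (al : 'I_n -> V -> C) (xs : 'I_n -> V),
  (forall i, hdual h (al i) /\ rootsp br h (al i) (xs i)) /\ x = \sum_(i < n) xs i.

Lemma opp_roots_br_h al be e f : rootsp br h al e -> rootsp br h be f ->
  eqh h (fun y => al y + be y) (fun _ => 0) -> h (br e f).
Proof. by move=> He Hf Hab; apply/g0_h/(rootsp_eqh Hab)/rootsp_br. Qed.

Section Simple.
Hypothesis g_findim : finite_dim (fun _ : V => True).
Hypothesis g_simple : simple_lie br.

Lemma center_eq0 z : (forall x, br x z = 0) -> z = 0.
Proof.
move=> z_central; case: g_simple => [[x0 [y0 xy0]] ideals].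
have center_ideal : lie_ideal br (fun z => forall x, br x z = 0).
  split=> [|x y y_central x']; last first.
    by rewrite (br_jacobi br_lie) !y_central (br0r br_lie) addr0.
  split=> [x|a y y' yc y'c x]; first exact: br0r.
  by rewrite (brDr br_lie) (brZr br_lie) yc y'c scaler0 addr0.
have [|z_all] := ideals _ center_ideal; first by apply.
by move: xy0; rewrite z_all eqxx.
Qed.

Definition root_vector v := exists al, rootsp br h al v.

Lemma root_vector_basis : exists2 b, (forall v, v \in b -> root_vector v) &
  (forall x, seq_span b x) /\ seq_free b.
Proof.
have [s s_span] := g_findim.
suff [r r_root span_r] : exists2 r, (forall v, v \in r -> root_vector v) &
    forall x, x \in s -> seq_span r x.
  have [b b_root [span_b b_free]] := exists_free_subbasis r_root.
  exists b => //; split=> // x; apply/span_b/(seq_span_min (seq_span_subspace r) span_r).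
  exact/s_span.
elim: s {s_span} => [|x s [r r_root span_r]]; first by exists [::].
have [n [al [xs [Hxs ->]]]] := root_decomp x.
exists ([seq xs i | i <- index_enum 'I_n] ++ r) => [v|y].
  rewrite mem_cat => /orP [/mapP [i _ ->]|/r_root //]; exists (al i); exact: (Hxs i).2.
have span_cat v : v \in r -> seq_span ([seq xs i | i <- index_enum 'I_n] ++ r) v.
  by move=> vr; apply: seq_span_mem; rewrite mem_cat vr orbT.
rewrite inE => /predU1P [->|/span_r]; last exact: seq_span_min (seq_span_subspace _) span_cat _.
apply: (subspace_sum (seq_span_subspace _)) => i _; apply: seq_span_mem.
by rewrite mem_cat map_f ?mem_index_enum.
Qed.

(* [ad T] is diagonalizable, and each of its powers is a commutator
   [[ad E, ad F (ad T)^k]], hence traceless. *)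
Lemma heisenberg_eq0 E F : h (br E F) -> br (br E F) E = 0 -> br E F = 0.
Proof.
set T := br E F => hT TE.
have [b b_root [b_span b_free]] := root_vector_basis.
suff adT0 x : br T x = 0 by apply: center_eq0 => x; rewrite (brC br_lie) adT0 oppr0.
move: x; apply: (eigenbasis_trace_pow_eq0 (b_span := b_span) b_free (br_linr br_lie T)).
  by move=> j; have [al Hal] := b_root _ (mem_nth 0 (ltn_ord j)); exists (al T); apply: Hal.
have adT_E k x : iter k (br T) (br E x) = br E (iter k (br T) x).
  by elim: k => [|k IH] //=; rewrite IH (br_jacobi br_lie T) TE (br0l br_lie) add0r.
move=> k; pose G x := br F (iter k (br T) x).
have G_lin : linear G by apply: lin_comp (br_linr br_lie F) (lin_iter _ (br_linr br_lie T)).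
suff -> : iter k.+1 (br T) = fun x => br E (G x) - G (br E x).
  exact: trace_commutator (br_linr br_lie E) G_lin.
apply: funext => x; rewrite /G adT_E /= /T (br_jacobi br_lie E F).
by rewrite addrK.
Qed.

Lemma h_abelian x y : h x -> h y -> br x y = 0.
Proof. by move=> hx /g0_h Hy; rewrite Hy // scale0r. Qed.

Definition opp_bracket x := exists al be e f,
  [/\ rootsp br h al e, rootsp br h be f, eqh h (fun y => al y + be y) (fun _ => 0)
    & x = br e f].

Definition nonzero_root_vector v := exists2 al, ~ eqh h al (fun _ => 0) & rootsp br h al v.

Lemma opp_bracket_h x : opp_bracket x -> h x.
Proof.
by case=> al [be [e [f [He Hf Hab ->]]]]; apply: opp_roots_br_h He Hf Hab.
Qed.

Lemma nonzero_root_span_h_eq0 x : h x -> span_of nonzero_root_vector x -> x = 0.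
Proof.
move=> hx span_x.
pose P (p : (V -> C) * V) := `[< rootsp br h p.1 p.2 /\ ~ eqh h p.1 (fun _ => 0) >].
have [l xE] : exists l, x = \sum_(p <- l | P p) p.2.
  elim: span_x {hx} => [|a v y [al al0 Hv] _ [l ->]]; first by exists [::]; rewrite big_nil.
  exists ((al, a *: v) :: l); rewrite big_cons ifT //; apply/asboolP; split=> //.
  exact: (subspaceZ (rootsp_subspace br_lie _ _)).
apply/eqP; rewrite -oppr_eq0; apply/eqP.
apply: (rootsp_indep br_lie (gam := fun _ => 0) (al := fst) (x := snd) (r := l) (P := P)).
- by apply: (subspaceN (rootsp_subspace br_lie _ _)); apply/g0_h.
- by move=> p /asboolP.
- by rewrite -xE addNr.
Qed.

Let gen v := nonzero_root_vector v \/ opp_bracket v.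

Lemma br_root_vector_gen ga z v : rootsp br h ga z -> gen v -> span_of gen (br z v).
Proof.
move=> Hz [[al al0 Hv]|opp_v].
  apply: span_of_mem.
  have [ga_al0|ga_al_neq0] := pselect (eqh h (fun y => ga y + al y) (fun _ => 0)).
    by right; exists ga, al, z, v.
  by left; exists (fun y => ga y + al y) => //; apply: rootsp_br.
have hv := opp_bracket_h opp_v.
have [ga0|ga_neq0] := pselect (eqh h ga (fun _ => 0)).
  by rewrite h_abelian //; [apply: span_of0 | apply/g0_h/(rootsp_eqh ga0)].
rewrite (brC br_lie) (Hz _ hv) -scaleNr; apply: (subspaceZ (span_of_subspace _)).
by apply: span_of_mem; left; exists ga.
Qed.

Lemma gen_ideal : lie_ideal br (span_of gen).
Proof.
split=> [|x]; first exact: span_of_subspace.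
apply: (span_of_min (P := fun y => span_of gen (br x y))).
  exact/subspace_preim/span_of_subspace/br_linr.
move=> v gen_v; have [n [al [xs [Hxs ->]]]] := root_decomp x.
rewrite (br_suml br_lie); apply: (subspace_sum (span_of_subspace _)) => i _.
exact: br_root_vector_gen (Hxs i).2 gen_v.
Qed.

Lemma h_span_opp_bracket y : h y -> span_of opp_bracket y.
Proof.
move=> hy; case: g_simple => [[x0 [y0 xy0]] /(_ _ gen_ideal) [gen0|gen_all]].
  suff g_h x : h x by rewrite h_abelian ?eqxx in xy0.
  have [n [al [xs [Hxs ->]]]] := root_decomp x.
  apply: (subspace_sum h_sub) => i _.
  have [al0|al_neq0] := pselect (eqh h (al i) (fun _ => 0)).
    exact/g0_h/(rootsp_eqh al0 (Hxs i).2).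
  rewrite (gen0 (xs i)); first exact: subspace0.
  by apply/span_of_mem; left; exists (al i) => //; exact: (Hxs i).2.
have [y1 [y2 [span1 span2 yE]]] := span_of_union (gen_all y).
suff y1_0 : y1 = 0 by rewrite yE y1_0 add0r.
apply: nonzero_root_span_h_eq0 span1.
have -> : y1 = y - y2 by rewrite yE addrK.
by apply: (subspaceB h_sub hy); apply: (span_of_min h_sub opp_bracket_h span2).
Qed.

End Simple.

Section Automorphism.
Variables (sigma : V -> V) (m : nat).
Hypothesis sigma_lin : linear sigma.
Hypothesis sigma_br : forall x y, sigma (br x y) = br (sigma x) (sigma y).
Hypothesis sigma_order : forall x, iter m sigma x = x.
Hypothesis sigma_h : forall x, h x <-> h (sigma x).
Hypothesis fixed_centralizer : forall x, sigma x = x ->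
  ((forall y, h y -> sigma y = y -> br y x = 0) <-> h x).
Hypothesis m_prime : prime m.

Local Notation sig j := (iter j sigma).
Local Notation hs := (fun y => h y /\ sigma y = y).

Lemma m_gt0 : (0 < m)%N. Proof. exact: prime_gt0. Qed.

Lemma natr_m_neq0 : (m%:R : C) != 0.
Proof. by rewrite pnatr_eq0 -lt0n m_gt0. Qed.

Lemma sig_lin j : linear (sig j). Proof. exact: lin_iter. Qed.

Lemma sig_br j x y : sig j (br x y) = br (sig j x) (sig j y).
Proof. by elim: j => [|j IH] //=; rewrite IH sigma_br. Qed.

Lemma sig_h j x : h x -> h (sig j x).
Proof. by move=> hx; elim: j => [|j IH] //=; apply/(sigma_h _).1. Qed.

Lemma sig_fixed j x : sigma x = x -> sig j x = x.
Proof. by move=> sx; elim: j => [|j IH] //=; rewrite IH. Qed.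

Lemma sig_mul q x : sig (m * q) x = x.
Proof. by elim: q => [|q IH]; rewrite ?muln0 // mulnS iterD sigma_order IH. Qed.

Lemma sig_subnK i x : (i <= m)%N -> sig i (sig (m - i) x) = x.
Proof. by move=> im; rewrite -iterD subnKC. Qed.

Definition orbit_sum x := \sum_(i < m) sig i x.

Lemma orbit_sum_fixed x : sigma (orbit_sum x) = orbit_sum x.
Proof.
move: (sigma_order x); rewrite /orbit_sum (lin_sum sigma_lin) -(prednK m_gt0).
move=> sig_m; rewrite big_ord_recr big_ord_recl /= -[sigma (sig _ x)]/(sig m.-1.+1 x).
by rewrite sig_m addrC; congr (_ + _); apply: eq_bigr.
Qed.

Lemma orbit_sum_hs x : h x -> hs (orbit_sum x).
Proof.
move=> hx; split; last exact: orbit_sum_fixed.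
by apply: (subspace_sum h_sub) => i _; apply: sig_h.
Qed.

Lemma rootsp_sig al e i : (i <= m)%N -> rootsp br h al e ->
  rootsp br h (fun z => al (sig (m - i) z)) (sig i e).
Proof.
move=> im He z hz; rewrite -{1}(sig_subnK z im) -sig_br He; last exact: sig_h.
exact: linZ (sig_lin i) _ _.
Qed.

Lemma rootsp_fixed_sig al e i : rootsp br h al e -> rootsp br hs al (sig i e).
Proof.
move=> He y [hy sy]; rewrite -{1}(sig_fixed i sy) -sig_br He //.
exact: linZ (sig_lin i) _ _.
Qed.

Lemma rootsp_fixed_orbit_sum al e : rootsp br h al e -> rootsp br hs al (orbit_sum e).
Proof.
move=> He; apply: (subspace_sum (rootsp_subspace br_lie _ _)) => i _.
exact: rootsp_fixed_sig.
Qed.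

(* Since [m] is prime, any [0 < e < m] generates the cyclic group [<sigma>]. *)
Lemma weight_sigma_inv (be : V -> C) e : (0 < e < m)%N ->
  eqh h (fun z => be (sig e z)) be -> forall z, h z -> be (sigma z) = be z.
Proof.
case/andP=> e_gt0 e_lt_m be_e.
have be_ke k z : h z -> be (sig (k * e) z) = be z.
  elim: k z => [//|k IH] z hz.
  by rewrite mulSn iterD be_e ?IH //; apply: sig_h.
have [a _] := Bezoutl e m_gt0.
have /eqP -> : coprime m e by rewrite prime_coprime // gtnNdvd.
case/dvdnP=> q aeE z hz; rewrite -(be_ke a (sigma z)); last exact/(sigma_h _).1.
by rewrite -[sigma z]/(sig 1 z) -iterD addnC aeE mulnC sig_mul.
Qed.

Lemma weight_orbit_sum (be : V -> C) z : hdual h be ->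
  (forall z, h z -> be (sigma z) = be z) -> h z -> be (orbit_sum z) = m%:R * be z.
Proof.
move=> be_lin be_sigma hz; have be_sig i : be (sig i z) = be z.
  by elim: i => [|i IH] //=; rewrite be_sigma ?IH //; apply: sig_h.
rewrite /orbit_sum (hdual_sum _ h_sub be_lin) => [|i _]; last exact: sig_h.
by rewrite (eq_bigr (fun=> be z)) ?sumr_const ?card_ord ?mulr_natl.
Qed.

Lemma weight_sigma_inv_eq0 (be : V -> C) : hdual h be ->
  (forall z, h z -> be (sigma z) = be z) -> (forall y, hs y -> be y = 0) ->
  eqh h be (fun _ => 0).
Proof.
move=> be_lin be_sigma be_fixed z hz; apply/eqP.
rewrite -(mulrI_eq0 _ (lregP natr_m_neq0)) -weight_orbit_sum // be_fixed //.
exact: orbit_sum_hs.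
Qed.

Lemma rootsp_fixed0_h be t : rootsp br h be t -> (forall y, hs y -> be y = 0) -> h t.
Proof.
move=> Ht be_fixed.
have [be0|be_ne0] := pselect (eqh h be (fun _ => 0)).
  by apply/g0_h; apply: rootsp_eqh be0 Ht.
have [->|t_ne0] := eqVneq t 0; first exact: subspace0.
have be_lin := rootsp_hdual br_lie h_sub t_ne0 Ht.
have be_orbit e : (0 < e < m)%N -> ~ eqh h (fun z => be (sig e z)) be.
  move=> e_range /(weight_sigma_inv e_range) be_sigma.
  exact/be_ne0/(weight_sigma_inv_eq0 be_lin be_sigma be_fixed).
have hq : h (orbit_sum t).
  apply/(fixed_centralizer (orbit_sum_fixed t)) => y hy sy.
  by rewrite (rootsp_fixed_orbit_sum Ht) // be_fixed // scale0r.
suff -> : t = 0 by exact: subspace0.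
apply: (rootsp_indep br_lie (r := None :: [seq Some i | i <- index_enum 'I_m.-1])
  (P := xpredT) (al := fun o => if o is Some i then fun z => be (sig (m - i.+1) z)
                               else fun _ => 0)
  (x := fun o => if o is Some i then sig i.+1 t else - orbit_sum t) Ht).
  case=> [i|] _; split.
  - by apply: rootsp_sig => //; have := ltn_ord i; lia.
  - by apply: be_orbit; have := ltn_ord i; lia.
  - by apply: (subspaceN (rootsp_subspace br_lie h _)); apply/g0_h.
  - by move=> be0; apply: be_ne0 => z /be0.
rewrite big_cons big_map /orbit_sum -(prednK m_gt0) big_ord_recl.
by rewrite /= opprD !addrA addrN add0r addNr.
Qed.

Lemma centralizer_fixed_h x : (forall y, hs y -> br y x = 0) -> h x.
Proof.
move=> x_cent; have [n [al [xs [Hxs xE]]]] := root_decomp x; rewrite xE.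
have Hxs_fixed i : rootsp br hs (al i) (xs i) by move=> y [hy _]; apply: (Hxs i).2.
pose P i := `[< eqh hs (al i) (fun _ => 0) >].
suff -> : \sum_i xs i = \sum_(i | P i) xs i.
  apply: (subspace_sum h_sub) => i /asboolP Pi.
  by apply: rootsp_fixed0_h (Hxs i).2 _ => y /Pi.
apply/eqP; rewrite eq_sym -subr_eq0; apply/eqP.
apply: (rootsp_indep br_lie (r := index_enum 'I_n) (P := predC P) (x := xs) (al := al)
  (gam := fun _ => 0)).
- apply: (subspaceB (rootsp_subspace br_lie _ _)).
    apply: (subspace_sum (rootsp_subspace br_lie _ _)) => i /asboolP Pi.
    exact: rootsp_eqh Pi (Hxs_fixed i).
  by move=> y hy; rewrite -xE x_cent // scale0r.
- by move=> i /asboolP nPi; split.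
- by rewrite [in X in _ - X](bigID P) /= opprD addrA addrN add0r addNr.
Qed.

Lemma rootsp_fixed0_weight0 al e : rootsp br h al e -> e != 0 ->
  (forall y, hs y -> al y = 0) -> eqh h al (fun _ => 0).
Proof.
move=> He e_neq0 al_fixed0 z hz; have /eqP := He z hz.
rewrite (h_abelian hz (rootsp_fixed0_h He al_fixed0)) eq_sym scaler_eq0 (negbTE e_neq0) orbF.
by move/eqP.
Qed.

Variable w : C.
Hypothesis w_prim : m.-primitive_root w.

Local Notation pik := (pik sigma m w).

Lemma w_neq0 : w != 0.
Proof. by rewrite (prim_root_eq0 w_prim) -lt0n m_gt0. Qed.

Lemma expfzD_w (a b : int) : w ^ (a + b) = w ^ a * w ^ b.
Proof. exact: expfzDr w_neq0. Qed.

Lemma expw_mul_m (k : int) : w ^ (m%:Z * k) = 1.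
Proof. by rewrite -exprz_exp -exprnP (prim_expr_order w_prim) exp1rz. Qed.

Lemma pik_lin k : linear (pik k).
Proof.
move=> a x y; rewrite /pik [in RHS]scalerA [a * _]mulrC -scalerA -scalerDr.
rewrite [a *: \sum_(i < m) _]scaler_sumr -big_split /=.
by congr (_ *: _); apply: eq_bigr => i _; rewrite (sig_lin i) scalerDr !scalerA mulrC.
Qed.

Lemma pik_sigma k x : sigma (pik k x) = w ^ k *: pik k x.
Proof.
rewrite /pik (linZ sigma_lin) (lin_sum sigma_lin) [in RHS]scalerA [_ * _]mulrC.
rewrite -[in RHS]scalerA; congr (_ *: _); rewrite scaler_sumr.
move: (sigma_order x); rewrite -(prednK m_gt0) => sig_m.
rewrite big_ord_recr big_ord_recl /= addrC (linZ sigma_lin).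
rewrite -[sigma (sig _ x)]/(sig m.-1.+1 x) sig_m scalerA; congr (_ + _).
  congr (_ *: _); rewrite mul0r oppr0 expr0z mulr1 -[LHS]mul1r -(expw_mul_m k).
  rewrite -expfzD_w; congr (w ^ _).
  by rewrite -[in X in X * k](prednK m_gt0) -addn1 PoszD; ring.
apply: eq_bigr => i _; rewrite (linZ sigma_lin) scalerA -expfzD_w.
by congr (w ^ _ *: _); rewrite /bump /= add1n -addn1 PoszD; ring.
Qed.

Lemma sig_eigen k x i : sigma x = w ^ k *: x -> sig i x = w ^ ((i : nat)%:Z * k) *: x.
Proof.
move=> sx; elim: i => [|i IH] /=; first by rewrite mul0r expr0z scale1r.
rewrite IH (linZ sigma_lin) sx scalerA -expfzD_w.
by congr (w ^ _ *: _); rewrite -addn1 PoszD; ring.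
Qed.

Lemma pik_id k x : sigma x = w ^ k *: x -> pik k x = x.
Proof.
move=> sx; rewrite /pik (eq_bigr (fun=> x)) => [|i _]; last first.
  by rewrite (sig_eigen _ sx) scalerA -expfzD_w addNr expr0z scale1r.
by rewrite sumr_const card_ord -scaler_nat scalerA mulVf ?scale1r // natr_m_neq0.
Qed.

Lemma sum_prim_root_pow (i j : nat) : (i < m)%N -> (j < m)%N ->
  \sum_(a < m) w ^ ((a : nat)%:Z * (j%:Z - i%:Z)) = (i == j)%:R * m%:R.
Proof.
move=> im jm; have [->|ne] := eqVneq i j.
  rewrite subrr (eq_bigr (fun=> 1)) => [|a _]; last by rewrite mulr0 expr0z.
  by rewrite sumr_const card_ord mul1r.
rewrite mul0r; set u := w ^ (j%:Z - i%:Z).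
rewrite (eq_bigr (fun a : 'I_m => u ^+ a)) => [|a _]; last by rewrite mulrC -exprz_exp -exprnP.
have u_m : u ^+ m = 1 by rewrite /u exprnP exprz_exp mulrC expw_mul_m.
have u_neq1 : u != 1.
  apply: contra ne => /eqP u1.
  rewrite -(modn_small im) -(modn_small jm) -(eq_prim_root_expr w_prim).
  by rewrite !exprnP -[j%:Z](subrK i%:Z) expfzD_w -/u u1 mul1r.
by have /esym/eqP := subrX1 u m; rewrite u_m subrr mulf_eq0 subr_eq0 (negbTE u_neq1) => /eqP.
Qed.

(* Expanding both sides over [i, j < m], [sum_prim_root_pow] kills the terms
   with [i != j]. *)
Lemma pik_br_sum e f (k : int) :
  \sum_(a < m) br (pik (a : nat)%:Z e) (pik (k - (a : nat)%:Z) f) = pik k (br e f).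
Proof.
set c := (m%:R : C)^-1.
have pikE (a : 'I_m) : br (pik (a : nat)%:Z e) (pik (k - (a : nat)%:Z) f) =
    \sum_(i < m) \sum_(j < m) (c * c * (w ^ (- ((i : nat)%:Z * (a : nat)%:Z)) *
      w ^ (- ((j : nat)%:Z * (k - (a : nat)%:Z))))) *: br (sig i e) (sig j f).
  rewrite /pik (brZl br_lie) (brZr br_lie) (br_suml br_lie) scalerA scaler_sumr.
  apply: eq_bigr => i _; rewrite (brZl br_lie) (br_sumr br_lie) !scaler_sumr.
  by apply: eq_bigr => j _; rewrite (brZr br_lie) !scalerA; congr (_ *: _); rewrite /c; ring.
rewrite (eq_bigr _ (fun a _ => pikE a)) exchange_big /= /pik scaler_sumr.
apply: eq_bigr => i _; rewrite exchange_big /= (bigD1 i) //= [X in _ + X]big1 ?addr0.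
  rewrite -scaler_suml (eq_bigr (fun=> c * c * w ^ (- ((i : nat)%:Z * k)))) => [|a _].
    rewrite sumr_const card_ord -mulr_natr -sig_br scalerA; congr (_ *: _).
    transitivity ((c * m%:R) * (c * w ^ (- ((i : nat)%:Z * k)))); first by ring.
    by rewrite mulVf ?mul1r // natr_m_neq0.
  by rewrite -expfzD_w; congr (_ * w ^ _); ring.
move=> j ne; rewrite -scaler_suml.
rewrite (eq_bigr (fun a : 'I_m => c * c * w ^ (- ((j : nat)%:Z * k)) *
           w ^ ((a : nat)%:Z * ((j : nat)%:Z - (i : nat)%:Z)))) => [|a _].
  by rewrite -mulr_sumr sum_prim_root_pow // val_eqE eq_sym (negbTE ne) !mul0r mulr0 scale0r.
by rewrite -[RHS]mulrA -!expfzD_w; congr (_ * w ^ _); ring.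
Qed.

Lemma rootsp_fixed_pik al e k : rootsp br h al e -> rootsp br hs al (pik k e).
Proof.
move=> He; apply: (subspaceZ (rootsp_subspace br_lie _ _)).
apply: (subspace_sum (rootsp_subspace br_lie _ _)) => i _.
exact/(subspaceZ (rootsp_subspace br_lie _ _))/rootsp_fixed_sig.
Qed.

Lemma in_aff_tk k v : sigma v = w ^ k *: v -> in_aff sigma w (aff_tk k v).
Proof.
move=> sv; split=> [|n /=]; last by case: ifP => [/eqP -> //|_]; rewrite lin0 // scaler0.
by exists `|k|%N; apply: bounded_tk.
Qed.

Variable B : V -> V -> C.

Lemma kdelta_spaceP k : k != 0 -> forall X,
  kdelta_space br B h sigma w k X <-> pik_h_tk h sigma m w k X.
Proof.
move=> k0 X; split=> [[[_ X_sigma] X_root]|[y [hy ->]]].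
  have d_htilde : in_htilde h sigma (Aff (fun _ => 0) 0 1).
    by split=> //; [exact: subspace0 | exact: lin0].
  have XE := aff_d_eigen br_lie k0 (X_root _ d_htilde).
  exists (aloop X k); split; last by rewrite pik_id.
  apply: centralizer_fixed_h => y [hy sy].
  have y_htilde : in_htilde h sigma (aff_tk 0 y) by split=> //= n /negbTE ->.
  move: (congr1 (fun Y => aloop Y k) (X_root _ y_htilde)); rewrite aff_br0E /=.
  by rewrite (negbTE k0) mul0r mulr0 !scale0r scaler0 subr0 addr0.
split; first exact/in_aff_tk/pik_sigma.
move=> H [H0 hH sH]; rewrite (aff_br_htilde_tk _ _ _ H0 (al := fun _ => 0)) ?add0r //.
by apply: (rootsp_fixed_pik (al := fun _ => 0)) => //; apply/g0_h.
Qed.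

Section Core.
Hypothesis form_good : good_form br B.
Hypothesis B_sigma : forall x y, B (sigma x) (sigma y) = B x y.
Hypothesis g_findim : finite_dim (fun _ : V => True).
Hypothesis g_simple : simple_lie br.

Lemma B_rootsp_orth al be e f : rootsp br h al e -> rootsp br h be f ->
  ~ eqh h (fun y => al y + be y) (fun _ => 0) -> B e f = 0.
Proof.
move=> He Hf /eqhPn [y hy /negbTE ab_y].
have : (al y + be y) * B e f = 0.
  rewrite mulrDl -(BZl form_good) -(BZr form_good) -He // -Hf //.
  by rewrite -(B_invariant form_good) [br e y](brC br_lie) (BNl form_good) addrN.
by move/eqP; rewrite mulf_eq0 ab_y => /eqP.
Qed.

Lemma form_nondeg_h u : h u -> (forall y, h y -> B y u = 0) -> u = 0.
Proof.
move=> hu u_orth; case: form_good => _ _ nondeg _; apply: nondeg => z.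
have [n [al [xs [Hxs ->]]]] := root_decomp z.
rewrite (B_sumr form_good) big1 // => i _.
have [al0|al_neq0] := pselect (eqh h (al i) (fun _ => 0)).
  by rewrite (BC form_good) u_orth //; apply/g0_h/(rootsp_eqh al0 (Hxs i).2).
apply: B_rootsp_orth (proj2 (g0_h u) hu) (Hxs i).2 _ => al_eq0.
by apply: al_neq0 => y /al_eq0; rewrite add0r.
Qed.

Lemma B_sig i x y : B (sig i x) (sig i y) = B x y.
Proof. by elim: i x y => [|i IH] x y //=; rewrite B_sigma IH. Qed.

Lemma B_orbit_sum_fixed y x : sigma y = y -> B y (orbit_sum x) = m%:R * B y x.
Proof.
move=> sy; rewrite (B_sumr form_good) (eq_bigr (fun=> B y x)) => [|i _].
  by rewrite sumr_const card_ord mulr_natl.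
by rewrite -{1}(sig_fixed i sy) B_sig.
Qed.

Lemma B_orbit_sum_orth al be e f : rootsp br h al e -> rootsp br h be f ->
  eqh h (fun y => al y + be y) (fun _ => 0) ->
  ~ (forall z, h z -> al (sigma z) = al z) -> B (orbit_sum e) f = B e f.
Proof.
move=> He Hf Hab al_sigma_neq.
rewrite /orbit_sum (B_suml form_good) -(prednK m_gt0) big_ord_recl /= big1 ?addr0 // => i _.
have i_lt := ltn_ord i; apply: (B_rootsp_orth (rootsp_sig (i := i.+1) _ He) Hf); first lia.
move=> al_be0; apply: al_sigma_neq; apply: (weight_sigma_inv (e := m - i.+1)); first lia.
by move=> z hz; apply: (addIr (be z)); rewrite (al_be0 z hz) (Hab z hz).
Qed.

Lemma B_orbit_sum_br al e f y : rootsp br h al e -> hs y ->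
  B y (orbit_sum (br e f)) = al y * (m%:R * B e f).
Proof.
by move=> He [hy sy]; rewrite B_orbit_sum_fixed // (B_br_weight form_good _ He hy) mulrCA.
Qed.

Lemma opp_bracket_weight_sigma_inv al be e f :
  rootsp br h al e -> rootsp br h be f -> eqh h (fun y => al y + be y) (fun _ => 0) ->
  B e f != 0 -> al (orbit_sum (br e f)) = 0 -> forall z, h z -> al (sigma z) = al z.
Proof.
move=> He Hf Hab ef_neq0 al_Q; apply: contrapT => al_sigma_neq.
set T := br (orbit_sum e) (orbit_sum f).
have mef_neq0 : m%:R * B e f != 0 by rewrite mulf_neq0 ?natr_m_neq0.
have T_fixed : sigma T = T by rewrite sigma_br !orbit_sum_fixed.
have hsT : hs T.
  split=> //; apply/(fixed_centralizer T_fixed) => y hy sy.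
  rewrite (rootsp_br br_lie (rootsp_fixed_orbit_sum He) (rootsp_fixed_orbit_sum Hf)) //=.
  by rewrite Hab // scale0r.
have B_T y : hs y -> B y T = al y * (m%:R * B e f).
  move=> hsy; rewrite (B_br_weight form_good _ (rootsp_fixed_orbit_sum He) hsy).
  by rewrite B_orbit_sum_fixed ?orbit_sum_fixed // (B_orbit_sum_orth He Hf Hab).
have h_ef := opp_roots_br_h He Hf Hab.
have al_T : al T = 0.
  apply/eqP; rewrite -(mulIr_eq0 _ (rregP mef_neq0)) -(B_orbit_sum_br _ He) //.
    rewrite (BC form_good) B_T.
    by rewrite al_Q mul0r.
  exact: orbit_sum_hs.
have T0 : T = 0.
  apply: (heisenberg_eq0 g_findim g_simple hsT.1).
  by rewrite (rootsp_fixed_orbit_sum He) // al_T scale0r.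
have e_neq0 : e != 0 by apply: contraNneq ef_neq0 => ->; rewrite (B0l form_good).
have al0 : eqh h al (fun _ => 0).
  apply: (rootsp_fixed0_weight0 He e_neq0) => y hsy; apply/eqP.
  by rewrite -(mulIr_eq0 _ (rregP mef_neq0)) -B_T // T0 (B0r form_good).
by apply: al_sigma_neq => z hz; rewrite !al0 //; apply/(sigma_h _).1.
Qed.

Lemma opp_bracket_isotropic_eq0 al be e f :
  rootsp br h al e -> rootsp br h be f -> eqh h (fun y => al y + be y) (fun _ => 0) ->
  B e f != 0 -> B (orbit_sum (br e f)) (orbit_sum (br e f)) = 0 -> br e f = 0.
Proof.
move=> He Hf Hab ef_neq0 QQ0.
have h_ef := opp_roots_br_h He Hf Hab.
have mef_neq0 : m%:R * B e f != 0 by rewrite mulf_neq0 ?natr_m_neq0.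
have al_Q : al (orbit_sum (br e f)) = 0.
  apply/eqP; rewrite -(mulIr_eq0 _ (rregP mef_neq0)) -B_orbit_sum_br // ?QQ0 //.
  exact: orbit_sum_hs.
have al_sigma := opp_bracket_weight_sigma_inv He Hf Hab ef_neq0 al_Q.
have e_neq0 : e != 0 by apply: contraNneq ef_neq0 => ->; rewrite (B0l form_good).
have al_lin := rootsp_hdual br_lie h_sub e_neq0 He.
have al_T : al (br e f) = 0.
  apply/eqP; rewrite -(mulrI_eq0 _ (lregP natr_m_neq0)) -weight_orbit_sum //.
  by rewrite al_Q.
apply: (heisenberg_eq0 g_findim g_simple h_ef).
by rewrite (He _ h_ef) al_T scale0r.
Qed.

Lemma core_root_tk (lam : V -> C) x (a : int) t0 : hs t0 -> B t0 t0 != 0 ->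
  (forall y, hs y -> B y t0 = lam y) -> rootsp br hs lam x -> sigma x = w ^ a *: x ->
  aff_core br B h sigma w (aff_tk a x).
Proof.
move=> hst0 t0t0 B_t0 Hx sx.
apply: (core_root (t := Aff (fun n => if n == 0 then t0 else 0) a%:~R 0)).
- by case: hst0 => ht0 st0; split=> //= n /negbTE ->.
- by rewrite /aff_form big_ord1 /= !mulr0 !addr0.
- exact: in_aff_tk.
move=> H [H0 hH sH]; rewrite (aff_br_htilde_tk B br_lie _ H0 (Hx _ (conj hH sH))).
by rewrite /aff_form big_ord1 /= subrr mulr0 addr0 B_t0 //; split.
Qed.

Lemma core_tk_subspace k : subspace (fun v => aff_core br B h sigma w (aff_tk k v)).
Proof.
split=> [|a x y Cx Cy]; first by rewrite aff_tk0; apply: core_zero.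
by rewrite aff_tkZD; apply/core_add/Cy/core_scale.
Qed.

Lemma core_pik_opp_bracket k al be e f : k != 0 ->
  rootsp br h al e -> rootsp br h be f -> eqh h (fun y => al y + be y) (fun _ => 0) ->
  aff_core br B h sigma w (aff_tk k (pik k (br e f))).
Proof.
move=> k0 He Hf Hab.
have core0 v : v = 0 -> aff_core br B h sigma w (aff_tk k (pik k v)).
  by move=> ->; rewrite (lin0 (pik_lin k)); apply: subspace0 (core_tk_subspace k).
have h_ef := opp_roots_br_h He Hf Hab.
have [ef0|ef_neq0] := eqVneq (B e f) 0.
  apply/core0/form_nondeg_h => // y hy.
  by rewrite (B_br_weight form_good _ He hy) ef0 mulr0.
set Q := orbit_sum (br e f).
have [QQ0|QQ_neq0] := eqVneq (B Q Q) 0.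
  by apply/core0/(opp_bracket_isotropic_eq0 He Hf Hab).
have mef_neq0 : m%:R * B e f != 0 by rewrite mulf_neq0 ?natr_m_neq0.
(* [t0] represents the restriction of [al] to [h^sigma] via the form. *)
set t0 := (m%:R * B e f)^-1 *: Q.
have hst0 : hs t0.
  have [hQ sQ] := orbit_sum_hs h_ef.
  by split; [apply: subspaceZ | rewrite (linZ sigma_lin) sQ].
have B_t0 y : hs y -> B y t0 = al y.
  by move=> hsy; rewrite (BZr form_good) (B_orbit_sum_br _ He) // mulrCA mulVf ?mulr1.
have t0t0 : B t0 t0 != 0 by rewrite (BZl form_good) (BZr form_good) !mulf_neq0 ?invr_eq0.
have core_e a : aff_core br B h sigma w (aff_tk a (pik a e)).
  exact: core_root_tk hst0 t0t0 B_t0 (rootsp_fixed_pik a He) (pik_sigma a e).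
have core_f b : aff_core br B h sigma w (aff_tk b (pik b f)).
  apply: (core_root_tk (t0 := - t0)) (rootsp_fixed_pik b Hf) (pik_sigma b f).
  - by case: hst0 => ht0 st0; split; [apply: subspaceN | rewrite (linN sigma_lin) st0].
  - by rewrite (BNl form_good) (BNr form_good) opprK.
  - move=> y hsy; rewrite (BNr form_good) B_t0 //; apply/eqP.
    by rewrite eq_sym -addr_eq0 addrC (Hab y hsy.1).
rewrite -pik_br_sum; apply: (subspace_sum (core_tk_subspace k)) => a _.
have -> : aff_tk k (br (pik (a : nat)%:Z e) (pik (k - (a : nat)%:Z) f)) =
    aff_br br B a (aff_tk (a : nat)%:Z (pik (a : nat)%:Z e))
      (aff_tk (k - (a : nat)%:Z) (pik (k - (a : nat)%:Z) f)).
  by rewrite (aff_br_tk br_lie form_good) // subrKC.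
by apply: core_br; [apply: core_e | apply: core_f | apply: bounded_tk; rewrite absz_nat].
Qed.

Lemma core_pik_h k y : k != 0 -> h y -> aff_core br B h sigma w (aff_tk k (pik k y)).
Proof.
move=> k0 /(h_span_opp_bracket g_simple).
apply: (span_of_min (P := fun v => aff_core br B h sigma w (aff_tk k (pik k v)))).
  exact: subspace_preim (pik_lin k) (core_tk_subspace k).
by move=> x [al [be [e [f [He Hf Hab ->]]]]]; apply: core_pik_opp_bracket He Hf Hab.
Qed.

Lemma kdelta_space_core k X : k != 0 ->
  kdelta_space br B h sigma w k X -> aff_core br B h sigma w X.
Proof. by move=> k0 /(kdelta_spaceP k0) [y [hy ->]]; apply: core_pik_h. Qed.

End Core.

End Automorphism.

End EALA.

Theorem lemma5p2 (R : realType) (V : lmodType R[i])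
    (br : V -> V -> V) (B : V -> V -> R[i]) (h : V -> Prop)
    (sigma : V -> V) (m : nat) (w : R[i]) :
  eala br B h ->
  lie_aut br sigma ->
  (forall x, iter m sigma x = x) ->
  (forall x, h x <-> h (sigma x)) ->
  (forall x y, B (sigma x) (sigma y) = B x y) ->
  (forall x, sigma x = x ->
     ((forall y, h y -> sigma y = y -> br y x = 0) <-> h x)) ->
  m.-primitive_root w ->
  (exists al, Rx br B h al /\ nonisotropic B h (pi_dual sigma m al)) ->
  (* m is the order of sigma, and m is prime *)
  (forall j, (0 < j < m)%N -> exists x, iter j sigma x != x) ->
  prime m ->
  (forall k : int, k != 0 -> forall X,
      kdelta_space br B h sigma w k X <-> pik_h_tk h sigma m w k X) /\
  (finite_dim (fun _ : V => True) -> simple_lie br ->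
     forall k : int, k != 0 -> forall X,
       kdelta_space br B h sigma w k X -> aff_core br B h sigma w X).
Proof.
move=> [[br_lie form_good [h_sub _] _] [root_decomp g0_h _ _]] [sigma_lin _ sigma_br].
move=> sigma_order sigma_h B_sigma fixed_centralizer w_prim _ _ m_prime.
split=> [k k0 X|g_findim g_simple k k0 X].
  exact: kdelta_spaceP.
exact: kdelta_space_core.
Qed.
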